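(* Fix $R>0$. Then $E_{\mathcal A}(n,R)$ and $E_{\mathcal D}(n,R)$ are defined for all sufficiently large $n$, and: 1. If $R\ge1$, then $\lim_{n\to\infty}E_{\mathcal A}(n,R)=\frac{(2R-1)(R+1)}{2R^2}$ and $\lim_{n\to\infty}E_{\mathcal D}(n,R)=\frac{R+1}{2R}$. 2. If $R\le1$, then $\lim_{n\to\infty}E_{\mathcal A}(n,R)=\frac{R+1}{2}$ and $\lim_{n\to\infty}E_{\mathcal D}(n,R)=\frac{(2-R)(R+1)}{2}$.
   Context: For $x,y>0$, $\mathrm{less}(x,y)=y(\lceil x/y\rceil-1)$ and $\mathrm{less}(x)=\mathrm{less}(x,1)$. For positive integers $n$ with $\frac1n<R\le n$, let $\ell_1=\mathrm{less}(2n-\frac2R+1)$ and $\ell_2=\min\{n,\lfloor n/R\rfloor\}$. For $\ell=1,\dots,n$, let $R_\ell=\mathrm{less}(R,\frac{2}{\ell(\ell+1)})$ and $f(\ell)=n-\ell+\frac{\ell(\ell+1)R_\ell}{2n}$. Let $\mathrm{equilibrium}(n,R)=\ell_1/n$ if $\frac1n<R\le\frac2{n+1}$, and $\mathrm{equilibrium}(n,R)=f(\ell_2)$ if $\frac2{n+1}<R\le n$. This is the optimal expected number of objects won by the adversary bidder, of budget $R\beta$, against the disadvantaged bidder, of budget $\beta$, in the two-bidder position-randomized auction with $n$ objects. Define the effective winning ratios $$E_{\mathcal A}(n,R)=\frac{\mathrm{equilibrium}(n,R)}{nR/(R+1)},\qquad E_{\mathcal D}(n,R)=\frac{n-\mathrm{equilibrium}(n,R)}{n/(R+1)}.$$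 *)

From HB Require Import structures.
From mathcomp Require Import all_boot all_order all_algebra.
From mathcomp Require Import all_classical all_reals all_analysis.
Set Implicit Arguments. Unset Strict Implicit. Unset Printing Implicit Defensive.
Import Order.TTheory GRing.Theory Num.Theory.
Local Open Scope ring_scope.

Section Defs.
Variable K : realType.

Definition less2 (x y : K) : K := y * ((Num.ceil (x / y))%:~R - 1).
Definition less1 (x : K) : K := less2 x 1.

Definition ell1 (n : nat) (R : K) : K := less1 (2 * n%:R - 2 / R + 1).
Definition ell2 (n : nat) (R : K) : K :=
  Num.min (n%:R) ((Num.floor (n%:R / R))%:~R).
Definition Rl (R l : K) : K := less2 R (2 / (l * (l + 1))).
Definition fl (n : nat) (R l : K) : K :=
  n%:R - l + l * (l + 1) * Rl R l / (2 * n%:R).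

(* meaningful for 1/n < R <= n *)
Definition equilibrium (n : nat) (R : K) : K :=
  if R <= 2 / (n%:R + 1) then ell1 n R / n%:R else fl n R (ell2 n R).

Definition EA (n : nat) (R : K) : K := equilibrium n R / (n%:R * R / (R + 1)).
Definition ED (n : nat) (R : K) : K := (n%:R - equilibrium n R) / (n%:R / (R + 1)).
End Defs.

From mathcomp Require Import all_boot all_order all_algebra.
From mathcomp Require Import all_classical all_reals all_analysis.
From mathcomp Require Import ring lra.
Import Order.TTheory GRing.Theory Num.Theory numFieldNormedType.Exports.
Local Open Scope classical_set_scope.
Local Open Scope ring_scope.

(* For large n the equilibrium is f(l2), and since R_l lies in
   [R - 2/(l(l+1)), R), f(l) equals n - l + l(l+1)R/(2n) up to 1/n.
   For R >= 1 we have l2 = floor(n/R), and this main term exceeds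
   (1 - 1/(2R)) n by ((n - lR)^2 + lR^2)/(2nR), which is bounded since
   0 <= n - lR < R; for R <= 1 we have l2 = n and it equals Rn/2 + R/2.
   So the equilibrium is linear in n up to a bounded error, hence
   equilibrium/n converges, and the limits of E_A and E_D follow. *)

Section Equilibrium.
Variable K : realType.

Lemma less2_bounds (x y : K) : 0 < y -> x - y <= less2 x y < x.
Proof.
move=> y0; rewrite /less2.
have c_ge : x / y <= (Num.ceil (x / y))%:~R := ceil_ge _.
have c_lt : (Num.ceil (x / y))%:~R - 1 < x / y.
  by have := ceilB1_lt (x / y); rewrite rmorphB.
set c := (Num.ceil _)%:~R in c_ge c_lt *; set t := x / y in c_ge c_lt.
have -> : x = y * t by rewrite /t mulrC divfK ?gt_eqF.
apply/andP; split; nra.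
Qed.

Lemma fl_approx (n : nat) (R l : K) : (0 < n)%N -> 0 < l ->
  `|fl n R l - (n%:R - l + l * (l + 1) * R / (2 * n%:R))| <= n%:R^-1.
Proof.
move=> n0 l0; have N0 : 0 < n%:R :> K by rewrite ltr0n.
have l1 : 0 < l + 1 by rewrite addr_gt0.
have ll0 : 0 < l * (l + 1) by rewrite mulr_gt0.
have /andP[Q_ge Q_lt] := less2_bounds R _ (divr_gt0 (ltr0n K 2) ll0).
rewrite /fl /Rl; set Q := less2 _ _ in Q_ge Q_lt *.
have -> : n%:R - l + l * (l + 1) * Q / (2 * n%:R)
          - (n%:R - l + l * (l + 1) * R / (2 * n%:R))
        = - (l * (l + 1) * (R - Q)) / (2 * n%:R) by field; rewrite gt_eqF.
have gap : l * (l + 1) * (R - Q) <= 2.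
  have <- : l * (l + 1) * (2 / (l * (l + 1))) = 2 by field; rewrite ?gt_eqF.
  by rewrite ler_pM2l //; lra.
rewrite normrM normrN normfV ger0_norm; last by nra.
rewrite gtr0_norm ?mulr_gt0 // ler_pdivrMr ?mulr_gt0 //.
by rewrite mulrCA mulVf ?gt_eqF ?mulr1.
Qed.

Lemma equilibriumE (n : nat) (R : K) : 0 < R -> 2 <= R * n%:R ->
  equilibrium n R = fl n R (ell2 n R).
Proof.
move=> R0 nR; rewrite /equilibrium ifF //; apply/negbTE.
by rewrite -ltNge ltr_pdivrMr ?ltr_wpDl //; nra.
Qed.

Lemma ell2_floor (n : nat) (R : K) : 1 <= R ->
  ell2 n R = (Num.floor (n%:R / R))%:~R.
Proof.
move=> R1; apply: min_r; apply: (le_trans (floor_le _)).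
have := ler0n K n; rewrite ler_pdivrMr; nra.
Qed.

Lemma ell2_id (n : nat) (R : K) : 0 < R -> R <= 1 -> ell2 n R = n%:R.
Proof.
move=> R0 R1; apply: min_l.
have -> : n%:R = (n%:Z)%:~R :> K by [].
have n_ge0 : 0 <= (n%:Z)%:~R :> K by rewrite ler0z.
by rewrite ler_int floor_ge_int ler_pdivlMr //; nra.
Qed.

Lemma equilibrium_dev_ge1 (n : nat) (R : K) : 1 <= R -> R + 2 <= n%:R ->
  `|equilibrium n R - (1 - 1 / (2 * R)) * n%:R| <= R + 2.
Proof.
move=> R1 hn; have R0 : 0 < R by lra.
have N0 : 0 < n%:R :> K by lra.
have n_pos : (0 < n)%N by rewrite -(ltr0n K).
rewrite equilibriumE ?ell2_floor //; last by nra.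
set l := (Num.floor _)%:~R.
have l_le : l * R <= n%:R by rewrite -ler_pdivlMr // floor_le.
have l_gt : n%:R < (l + 1) * R.
  by rewrite -ltr_pdivrMr //; have := floorD1_gt (n%:R / R); rewrite rmorphD.
have l0 : 0 < l by nra.
set main := n%:R - l + l * (l + 1) * R / (2 * n%:R).
have fl_main : `|fl n R l - main| <= 1.
  by apply: (le_trans (fl_approx _ R _ n_pos l0)); rewrite invf_le1 // ler1n.
have main_dev : `|main - (1 - 1 / (2 * R)) * n%:R| <= R + 1.
  have -> : main - (1 - 1 / (2 * R)) * n%:R
          = ((n%:R - l * R) ^+ 2 + l * R ^+ 2) / (2 * n%:R * R).
    by rewrite /main; field; rewrite !gt_eqF.
  rewrite ger0_norm ?divr_ge0 ?ler_pdivrMr; nra.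
by apply: (le_trans (ler_distD main _ _)); lra.
Qed.

Lemma equilibrium_dev_le1 (n : nat) (R : K) : 0 < R -> R <= 1 -> 2 / R <= n%:R ->
  `|equilibrium n R - R / 2 * n%:R| <= 2.
Proof.
move=> R0 R1 hn; have nR : 2 <= R * n%:R by rewrite mulrC -ler_pdivrMr.
have N0 : 0 < n%:R :> K by nra.
have n_pos : (0 < n)%N by rewrite -(ltr0n K).
rewrite equilibriumE // ell2_id //.
have main_eq : n%:R - n%:R + n%:R * (n%:R + 1) * R / (2 * n%:R)
               = R / 2 * n%:R + R / 2 by field; rewrite gt_eqF.
have fl_main : `|fl n R n%:R - (R / 2 * n%:R + R / 2)| <= 1.
  rewrite -main_eq; apply: (le_trans (fl_approx _ R _ n_pos N0)).
  by rewrite invf_le1 // ler1n.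
apply: (le_trans (ler_distD (R / 2 * n%:R + R / 2) _ _)).
have -> : R / 2 * n%:R + R / 2 - R / 2 * n%:R = R / 2 by ring.
by rewrite [`|R / 2|]ger0_norm; lra.
Qed.

End Equilibrium.

Lemma cvg_ratio_of_bounded_dev (K : realType) (u : nat -> K) (L C : K) :
  (\forall n \near \oo, `|u n - L * n%:R| <= C) -> u n / n%:R @[n --> \oo] --> L.
Proof.
move=> dev; apply/cvgrPdist_le => e e0; near=> n.
have n_big : `|C| / e + 1 <= n%:R by near: n; exact: nbhs_infty_ger.
have dev_n : `|u n - L * n%:R| <= C by near: n.
have Ce : 0 <= `|C| / e by rewrite divr_ge0 // ltW.
have N0 : 0 < n%:R :> K by lra.
have -> : L - u n / n%:R = - (u n - L * n%:R) / n%:R by field; rewrite gt_eqF.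
rewrite normrM normrN normfV (gtr0_norm N0) ler_pdivrMr //.
apply: (le_trans dev_n); apply: (le_trans (ler_norm C)).
by rewrite mulrC -ler_pdivrMr //; lra.
Unshelve. all: by end_near.
Qed.

Lemma EA_ED_cvg (K : realType) (R L C A D : K) :
  A = L * ((R + 1) / R) -> D = (1 - L) * (R + 1) ->
  (\forall n \near \oo, `|equilibrium n R - L * n%:R| <= C) ->
  EA n R @[n --> \oo] --> A /\ ED n R @[n --> \oo] --> D.
Proof.
move=> -> -> dev; split.
  have -> : (fun n => EA n R) = (fun n => equilibrium n R / n%:R * ((R + 1) / R)).
    by apply: funext => n; rewrite /EA !invfM invrK; ring.
  by apply: cvgMr_tmp; apply: cvg_ratio_of_bounded_dev dev.
have -> : (fun n => ED n R) = (fun n => (n%:R - equilibrium n R) / n%:R * (R + 1)).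
  by apply: funext => n; rewrite /ED !invfM invrK; ring.
apply: cvgMr_tmp; apply: (@cvg_ratio_of_bounded_dev _ _ _ C).
apply: filterS dev => n; rewrite -normrN; congr (`|_| <= _); ring.
Qed.

Theorem corollary1 (K : realType) (R : K) (hR : 0 < R) :
  (\forall n \near \oo, 1 / (n%:R : K) < R <= n%:R) /\
  (1 <= R ->
     EA n R @[n --> \oo] --> ((2 * R - 1) * (R + 1) / (2 * R ^+ 2) : K) /\
     ED n R @[n --> \oo] --> ((R + 1) / (2 * R) : K)) /\
  (R <= 1 ->
     EA n R @[n --> \oo] --> ((R + 1) / 2 : K) /\
     ED n R @[n --> \oo] --> ((2 - R) * (R + 1) / 2 : K)).
Proof.
have R2 : 0 < 2 / R by rewrite divr_gt0.
have big := nbhs_infty_ger (R + 2 + 2 / R).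
split.
  apply: filterS big => n hn; have N0 : 0 < n%:R :> K by lra.
  rewrite ltr_pdivrMr // mulrC -ltr_pdivrMr // (_ : 1 / R = 2 / R / 2); lra.
split => R1.
  apply: (@EA_ED_cvg K R (1 - 1 / (2 * R)) (R + 2)); try by field; rewrite ?gt_eqF.
  by apply: filterS big => n hn; apply: equilibrium_dev_ge1 => //; lra.
apply: (@EA_ED_cvg K R (R / 2) 2); try by field; rewrite ?gt_eqF.
by apply: filterS big => n hn; apply: equilibrium_dev_le1 => //; lra.
Qed.
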